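(* (i) A $\mathbb{B}$-topological space $(X,\tau)$ is normal if and only if both topological spaces $(X,\tau[tt])$ and $(X,\tau[ff])$ are normal. (ii) $(X,\tau)$ is $T_4$ if and only if the topological space $(X,\tau[tt]\vee\tau[ff])$ is $T_0$, both $(X,\tau[tt])$ and $(X,\tau[ff])$ are $R_0$, and both $(X,\tau[tt])$ and $(X,\tau[ff])$ are normal.
   Context: $\mathbb{B}=\{0,1,tt,ff\}$ is the four-element Boolean algebra with bottom $0$, top $1$, and $tt,ff$ incomparable complements; $\neg$ its complement, $a\to b=\neg a\vee b$. A $\mathbb{B}$-topology on $X$ is $\tau\subseteq\mathbb{B}^X$ containing all constant maps and closed under arbitrary pointwise joins and finite pointwise meets; $\mu$ is closed if $\neg\mu\in\tau$; $\overline{\nu}$ is the meet of all closed sets $\ge\nu$. $\tau[b]=\{\lambda[b]:\lambda\in\tau\}$, $\lambda[b]=\{x:\lambda(x)\ge b\}$; $\tau[tt]\vee\tau[ff]$ is the topology generated by their union. $(X,\tau)$ is normal if for every open $\lambda$ and closed $\mu$ with $\mu\le\lambda$ there is an open $\nu$ with $\mu\le\nu\le\overline{\nu}\le\lambda$. Specialization $\mathbb{B}$-order: $\Omega(\tau)(x,y)=\bigwedge_{\lambda\in\tau}(\lambda(x)\to\lambda(y))$; $(X,\tau)$ is $R_0$ if $\Omega(\tau)$ is symmetric, $T_0$ if $\Omega(\tau)(x,y)=1=\Omega(\tau)(y,x)$ implies $x=y$, $T_1$ if $T_0$ and $R_0$, and $T_4$ if $T_1$ and normal. A topological space is normal if disjoint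 closed sets have disjoint open neighbourhoods (no separation assumption on points); it is $R_0$ if every open set containing a point contains the closure of that point's singleton. *)

From Stdlib Require Import Classical ClassicalEpsilon FunctionalExtensionality PropExtensionality.

Inductive B : Type := B0 | B1 | Btt | Bff.

Definition Ble (a b : B) : bool :=
  match a, b with
  | B0, _ => true
  | _, B1 => true
  | Btt, Btt => true
  | Bff, Bff => true
  | _, _ => false
  end.

Definition Bjoin (a b : B) : B :=
  match a, b with
  | B0, x => x
  | x, B0 => x
  | B1, _ => B1
  | _, B1 => B1
  | Btt, Btt => Btt
  | Bff, Bff => Bff
  | _, _ => B1
  end.

Definition Bmeet (a b : B) : B :=
  match a, b with
  | B1, x => x
  | x, B1 => x
  | B0, _ => B0
  | _, B0 => B0
  | Btt, Btt => Btt
  | Bff, Bff => Bff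
  | _, _ => B0
  end.

Definition Bneg (a : B) : B :=
  match a with B0 => B1 | B1 => B0 | Btt => Bff | Bff => Btt end.

Definition Bimp (a b : B) : B := Bjoin (Bneg a) b.

Definition Bsel (P : B -> Prop) (b d : B) : B :=
  if excluded_middle_informative (P b) then b else d.

Definition Bsup (P : B -> Prop) : B :=
  Bjoin (Bsel P B0 B0) (Bjoin (Bsel P B1 B0) (Bjoin (Bsel P Btt B0) (Bsel P Bff B0))).

Definition Binf (P : B -> Prop) : B :=
  Bmeet (Bsel P B0 B1) (Bmeet (Bsel P B1 B1) (Bmeet (Bsel P Btt B1) (Bsel P Bff B1))).

Definition Fle {X : Type} (f g : X -> B) : Prop := forall x, Ble (f x) (g x) = true.

Definition is_Btopology {X : Type} (tau : (X -> B) -> Prop) : Prop :=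
  (forall b : B, tau (fun _ => b)) /\
  (forall S : (X -> B) -> Prop, (forall l, S l -> tau l) ->
      tau (fun x => Bsup (fun b => exists l, S l /\ b = l x))) /\
  (forall l m, tau l -> tau m -> tau (fun x => Bmeet (l x) (m x))).

Definition Bclosed {X : Type} (tau : (X -> B) -> Prop) (mu : X -> B) : Prop :=
  tau (fun x => Bneg (mu x)).

Definition Bclosure {X : Type} (tau : (X -> B) -> Prop) (nu : X -> B) : X -> B :=
  fun x => Binf (fun b => exists mu, Bclosed tau mu /\ Fle nu mu /\ b = mu x).

Definition Bnormal {X : Type} (tau : (X -> B) -> Prop) : Prop :=
  forall lam mu, tau lam -> Bclosed tau mu -> Fle mu lam ->
    exists nu, tau nu /\ Fle mu nu /\ Fle nu (Bclosure tau nu)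
               /\ Fle (Bclosure tau nu) lam.

Definition Omega {X : Type} (tau : (X -> B) -> Prop) (x y : X) : B :=
  Binf (fun b => exists l, tau l /\ b = Bimp (l x) (l y)).

Definition BR0 {X : Type} (tau : (X -> B) -> Prop) : Prop :=
  forall x y, Omega tau x y = Omega tau y x.

Definition BT0 {X : Type} (tau : (X -> B) -> Prop) : Prop :=
  forall x y, Omega tau x y = B1 -> Omega tau y x = B1 -> x = y.

Definition BT1 {X : Type} (tau : (X -> B) -> Prop) : Prop := BT0 tau /\ BR0 tau.

Definition BT4 {X : Type} (tau : (X -> B) -> Prop) : Prop := BT1 tau /\ Bnormal tau.

Definition is_topology {X : Type} (T : (X -> Prop) -> Prop) : Prop :=
  T (fun _ => True) /\
  (forall F : (X -> Prop) -> Prop, (forall U, F U -> T U) ->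
      T (fun x => exists U, F U /\ U x)) /\
  (forall U V, T U -> T V -> T (fun x => U x /\ V x)).

(** tau[b] = { lambda[b] : lambda in tau },  lambda[b] = {x | lambda x >= b} *)
Definition cut {X : Type} (tau : (X -> B) -> Prop) (b : B) : (X -> Prop) -> Prop :=
  fun U => exists l, tau l /\ U = (fun x => Ble b (l x) = true).

Definition gen_topology {X : Type} (G : (X -> Prop) -> Prop) : (X -> Prop) -> Prop :=
  fun U => forall T, is_topology T -> (forall V, G V -> T V) -> T U.

Definition join_topology {X : Type} (T1 T2 : (X -> Prop) -> Prop) : (X -> Prop) -> Prop :=
  gen_topology (fun U => T1 U \/ T2 U).

Definition Tclosed {X : Type} (T : (X -> Prop) -> Prop) (A : X -> Prop) : Prop :=
  T (fun x => ~ A x).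

Definition Tnormal {X : Type} (T : (X -> Prop) -> Prop) : Prop :=
  forall A C, Tclosed T A -> Tclosed T C -> (forall x, A x -> C x -> False) ->
    exists U V, T U /\ T V /\ (forall x, A x -> U x) /\ (forall x, C x -> V x) /\
                (forall x, U x -> V x -> False).

Definition Tclosure {X : Type} (T : (X -> Prop) -> Prop) (A : X -> Prop) : X -> Prop :=
  fun y => forall U, T U -> U y -> exists z, A z /\ U z.

Definition TR0 {X : Type} (T : (X -> Prop) -> Prop) : Prop :=
  forall U x, T U -> U x -> forall y, Tclosure T (fun z => z = x) y -> U y.

Definition TT0 {X : Type} (T : (X -> Prop) -> Prop) : Prop :=
  forall x y, x <> y -> exists U, T U /\ ((U x /\ ~ U y) \/ (U y /\ ~ U x)).

From Stdlib Require Import Classical ClassicalEpsilon FunctionalExtensionality PropExtensionality Bool.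

(* Comparing an element of B with the two atoms tt and ff identifies B with the
   Boolean square 2 x 2, so a B-valued map is the pair of its cuts λ[tt] and λ[ff].
   A B-topology is the product of its two cut topologies: joining the tt-valued
   characteristic map of a set of τ[tt] with the ff-valued one of a set of τ[ff]
   gives an open map.  Closures are therefore computed cut by cut, and the
   normality of τ is the normality of both cuts.  Likewise Ω(x,y) >= c says that x
   lies in the c-cut closure of {y}, so Ω is symmetric iff both cuts are R0, and
   Ω(x,y) = 1 = Ω(y,x) says that no open set of either cut, hence of their join,
   separates x from y. *)

Definition Atom (c : B) : Prop := c = Btt \/ c = Bff.

Lemma Atom_tt : Atom Btt. Proof. now left. Qed.
Lemma Atom_ff : Atom Bff. Proof. now right. Qed.
#[local] Hint Resolve Atom_tt Atom_ff : core.

Lemma B_eq_atoms u v : (forall c, Atom c -> Ble c u = Ble c v) -> u = v.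
Proof.
  intro H; pose proof (H Btt Atom_tt); pose proof (H Bff Atom_ff).
  destruct u, v; simpl in *; congruence.
Qed.

Lemma Ble_atoms u v :
  Ble u v = true <-> (forall c, Atom c -> Ble c u = true -> Ble c v = true).
Proof.
  split.
  - intros H c [-> | ->]; destruct u, v; simpl in *; congruence.
  - intro H; pose proof (H Btt Atom_tt); pose proof (H Bff Atom_ff).
    destruct u, v; simpl in *; auto.
Qed.

Lemma Fle_atom {X : Type} (f g : X -> B) c x :
  Fle f g -> Atom c -> Ble c (f x) = true -> Ble c (g x) = true.
Proof. intros Hfg Hc; exact (proj1 (Ble_atoms _ _) (Hfg x) c Hc). Qed.

Lemma Ble_B1 c : Ble c B1 = true.
Proof. now destruct c. Qed.

Lemma pred_ext {X : Type} (U V : X -> Prop) : (forall x, U x <-> V x) -> U = V.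
Proof.
  intro H; apply functional_extensionality; intro x.
  now apply propositional_extensionality.
Qed.

Section AtomLe.
Variable c : B.
Hypothesis Hc : Atom c.

Lemma Ble_B0 : Ble c B0 = false.
Proof. now destruct Hc as [-> | ->]. Qed.

Lemma Ble_join u v : Ble c (Bjoin u v) = Ble c u || Ble c v.
Proof. destruct Hc as [-> | ->]; destruct u, v; reflexivity. Qed.

Lemma Ble_meet u v : Ble c (Bmeet u v) = Ble c u && Ble c v.
Proof. destruct Hc as [-> | ->]; destruct u, v; reflexivity. Qed.

Lemma Ble_neg_true u : Ble c (Bneg u) = true <-> Ble c u <> true.
Proof. destruct Hc as [-> | ->]; destruct u; simpl; intuition discriminate. Qed.

Lemma Ble_sel_B0 (P : B -> Prop) b : Ble c (Bsel P b B0) = true <-> P b /\ Ble c b = true.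
Proof.
  unfold Bsel; destruct (excluded_middle_informative (P b)); rewrite ?Ble_B0;
    intuition discriminate.
Qed.

Lemma Ble_sel_B1 (P : B -> Prop) b : Ble c (Bsel P b B1) = true <-> (P b -> Ble c b = true).
Proof.
  unfold Bsel; destruct (excluded_middle_informative (P b)); rewrite ?Ble_B1; intuition.
Qed.

Lemma Ble_sup (P : B -> Prop) : Ble c (Bsup P) = true <-> exists d, P d /\ Ble c d = true.
Proof.
  unfold Bsup; rewrite !Ble_join, !orb_true_iff, !Ble_sel_B0.
  split.
  - intros [[? ?] | [[? ?] | [[? ?] | [? ?]]]]; eauto.
  - intros [[] [? ?]]; tauto.
Qed.

Lemma Ble_inf (P : B -> Prop) : Ble c (Binf P) = true <-> forall d, P d -> Ble c d = true.
Proof.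
  unfold Binf; rewrite !Ble_meet, !andb_true_iff, !Ble_sel_B1.
  split.
  - intros (? & ? & ? & ?) []; assumption.
  - intro H; repeat split; apply H.
Qed.

End AtomLe.

Definition Bchar {X : Type} (c : B) (U : X -> Prop) : X -> B :=
  fun x => if excluded_middle_informative (U x) then c else B0.

Lemma Ble_Bchar {X : Type} c d (U : X -> Prop) x :
  Atom c -> Atom d -> Ble d (Bchar c U x) = true <-> U x /\ d = c.
Proof.
  intros Hc Hd; unfold Bchar; destruct (excluded_middle_informative (U x));
    destruct Hc, Hd; subst; simpl; intuition congruence.
Qed.

Section BTopology.
Variables (X : Type) (tau : (X -> B) -> Prop).
Hypothesis Htau : is_Btopology tau.

Lemma open_const b : tau (fun _ => b).
Proof. apply Htau. Qed.

Lemma open_sup (S : (X -> B) -> Prop) :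
  (forall l, S l -> tau l) -> tau (fun x => Bsup (fun b => exists l, S l /\ b = l x)).
Proof. apply Htau. Qed.

Lemma open_meet l m : tau l -> tau m -> tau (fun x => Bmeet (l x) (m x)).
Proof. apply Htau. Qed.

Lemma open_join l m : tau l -> tau m -> tau (fun x => Bjoin (l x) (m x)).
Proof.
  intros Hl Hm.
  replace (fun x => Bjoin (l x) (m x))
    with (fun x => Bsup (fun b => exists k, (k = l \/ k = m) /\ b = k x)).
  - apply open_sup; intros k [-> | ->]; assumption.
  - apply functional_extensionality; intro x; apply B_eq_atoms; intros c Hc.
    apply eq_iff_eq_true; rewrite Ble_join, orb_true_iff, Ble_sup by exact Hc.
    split.
    + intros (d & (k & [-> | ->] & ->) & Hd); auto.
    + intros [H | H]; [exists (l x) | exists (m x)]; split; eauto.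
Qed.

Lemma closed_neg_open l : tau l -> Bclosed tau (fun x => Bneg (l x)).
Proof.
  unfold Bclosed; replace (fun x => Bneg (Bneg (l x))) with l; [easy|].
  apply functional_extensionality; intro x; now destruct (l x).
Qed.

Lemma cut_open c l : tau l -> cut tau c (fun x => Ble c (l x) = true).
Proof. now exists l. Qed.

Lemma cut_closed c mu : Atom c -> Bclosed tau mu -> Tclosed (cut tau c) (fun x => Ble c (mu x) = true).
Proof.
  intros Hc Hmu; exists (fun x => Bneg (mu x)); split; [exact Hmu|].
  apply pred_ext; intro x; now rewrite Ble_neg_true.
Qed.

Lemma open_Bchar c U : Atom c -> cut tau c U -> tau (Bchar c U).
Proof.
  intros Hc [l [Hl ->]].
  replace (Bchar c (fun x => Ble c (l x) = true)) with (fun x => Bmeet (l x) c).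
  - now apply open_meet, open_const.
  - apply functional_extensionality; intro x; apply B_eq_atoms; intros d Hd.
    apply eq_iff_eq_true; rewrite Ble_meet, andb_true_iff, Ble_Bchar by assumption.
    destruct Hc, Hd; subst; simpl; intuition congruence.
Qed.

Lemma closed_Bchar c U : Atom c -> Tclosed (cut tau c) U -> Bclosed tau (Bchar c U).
Proof.
  intros Hc HU; unfold Bclosed.
  replace (fun x => Bneg (Bchar c U x))
    with (fun x => Bjoin (Bchar c (fun y => ~ U y) x) (Bneg c)).
  - now apply open_join; [apply open_Bchar | apply open_const].
  - apply functional_extensionality; intro x; unfold Bchar.
    destruct (excluded_middle_informative (U x)), (excluded_middle_informative (~ U x));
      try tauto; destruct Hc; subst; reflexivity.
Qed.

Lemma Ble_closure c nu x : Atom c ->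
  Ble c (Bclosure tau nu x) = true <->
  forall mu, Bclosed tau mu -> Fle nu mu -> Ble c (mu x) = true.
Proof.
  intro Hc; unfold Bclosure; rewrite Ble_inf by exact Hc.
  split.
  - intros H mu Hmu Hle; apply H; eauto.
  - intros H d (mu & Hmu & Hle & ->); auto.
Qed.

Lemma closure_ge nu : Fle nu (Bclosure tau nu).
Proof.
  intro x; apply Ble_atoms; intros c Hc Hx.
  apply Ble_closure; [exact Hc|]. intros mu _ Hle; exact (Fle_atom _ _ c x Hle Hc Hx).
Qed.

(* The complement of the closure is the join of the complements of all closed
   majorants of nu. *)
Lemma closed_closure nu : Bclosed tau (Bclosure tau nu).
Proof.
  set (S := fun l => exists mu, Bclosed tau mu /\ Fle nu mu /\ l = (fun x => Bneg (mu x))).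
  unfold Bclosed; replace (fun x => Bneg (Bclosure tau nu x))
    with (fun x => Bsup (fun b => exists l, S l /\ b = l x)).
  { apply open_sup; intros l (mu & Hmu & _ & ->); exact Hmu. }
  apply functional_extensionality; intro x; apply B_eq_atoms; intros c Hc.
  apply eq_iff_eq_true; rewrite Ble_neg_true, Ble_closure, Ble_sup by exact Hc.
  split.
  - intros (d & (l & (mu & Hmu & Hle & ->) & ->) & Hd) Hx.
    apply (Ble_neg_true c Hc) in Hd; exact (Hd (Hx mu Hmu Hle)).
  - intro Hx; apply not_all_ex_not in Hx as [mu Hx].
    apply imply_to_and in Hx as [Hmu Hx]; apply imply_to_and in Hx as [Hle Hx].
    exists (Bneg (mu x)); split.
    + exists (fun y => Bneg (mu y)); split; [exists mu|]; auto.
    + now apply Ble_neg_true.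
Qed.

Lemma closure_disjoint_cut c V nu : Atom c -> cut tau c V ->
  (forall x, Ble c (nu x) = true -> ~ V x) ->
  forall x, Ble c (Bclosure tau nu x) = true -> ~ V x.
Proof.
  intros Hc HV Hnu x Hx HVx.
  assert (Hle : Fle nu (fun y => Bneg (Bchar c V y))).
  { intro y; apply Ble_atoms; intros d Hd Hy.
    rewrite Ble_neg_true, Ble_Bchar by assumption.
    intros [HVy ->]; exact (Hnu y Hy HVy). }
  pose proof (proj1 (Ble_closure c nu x Hc) Hx _ (closed_neg_open _ (open_Bchar c V Hc HV)) Hle)
    as Hneg.
  rewrite Ble_neg_true, Ble_Bchar in Hneg by assumption.
  tauto.
Qed.

Lemma Bnormal_cut_normal c : Atom c -> Bnormal tau -> Tnormal (cut tau c).
Proof.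
  intros Hc Hn A C HA HC HAC.
  set (lam := fun x => Bneg (Bchar c C x)).
  assert (Hle : Fle (Bchar c A) lam).
  { intro x; apply Ble_atoms; intros d Hd HAx.
    apply Ble_Bchar in HAx as [Ax ->]; [|assumption..].
    unfold lam; rewrite Ble_neg_true, Ble_Bchar by assumption.
    intros [Cx _]; exact (HAC x Ax Cx). }
  destruct (Hn lam (Bchar c A) (closed_Bchar c C Hc HC) (closed_Bchar c A Hc HA) Hle)
    as (nu & Hnu & HAnu & _ & Hcl).
  exists (fun x => Ble c (nu x) = true), (fun x => Ble c (Bneg (Bclosure tau nu x)) = true).
  repeat split.
  - now apply cut_open.
  - apply cut_open, closed_closure.
  - intros x Ax; apply (Fle_atom _ _ c x HAnu Hc), Ble_Bchar; auto.
  - intros x Cx; apply Ble_neg_true; [exact Hc|]; intro Hx.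
    pose proof (Fle_atom _ _ c x Hcl Hc Hx) as Hlam.
    unfold lam in Hlam; rewrite Ble_neg_true, Ble_Bchar in Hlam by assumption.
    tauto.
  - intros x Hx Hnot; apply (Ble_neg_true c Hc) in Hnot.
    exact (Hnot (Fle_atom _ _ c x (closure_ge nu) Hc Hx)).
Qed.

Lemma cut_normal_separates c lam mu : Atom c -> Tnormal (cut tau c) ->
  tau lam -> Bclosed tau mu -> Fle mu lam ->
  exists U V, cut tau c U /\ cut tau c V /\
    (forall x, Ble c (mu x) = true -> U x) /\ (forall x, Ble c (lam x) = false -> V x) /\
    (forall x, U x -> V x -> False).
Proof.
  intros Hc Hn Hlam Hmu Hle; apply Hn.
  - now apply cut_closed.
  - exists lam; split; [exact Hlam|].
    apply pred_ext; intro x; destruct (Ble c (lam x)); intuition congruence.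
  - intros x Hmux Hlamx.
    rewrite (Fle_atom _ _ c x Hle Hc Hmux) in Hlamx; discriminate.
Qed.

(* The separating sets of the two cuts are glued into one open map nu. *)
Lemma cuts_normal_Bnormal :
  Tnormal (cut tau Btt) -> Tnormal (cut tau Bff) -> Bnormal tau.
Proof.
  intros Htt Hff lam mu Hlam Hmu Hle.
  destruct (cut_normal_separates Btt lam mu Atom_tt Htt Hlam Hmu Hle)
    as (Ut & Vt & HUt & HVt & Hmut & Hlamt & Hdist).
  destruct (cut_normal_separates Bff lam mu Atom_ff Hff Hlam Hmu Hle)
    as (Uf & Vf & HUf & HVf & Hmuf & Hlamf & Hdisf).
  set (nu := fun x => Bjoin (Bchar Btt Ut x) (Bchar Bff Uf x)).
  assert (Hnu_tt : forall x, Ble Btt (nu x) = true <-> Ut x).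
  { intro x; unfold nu, Bchar.
    destruct (excluded_middle_informative (Ut x)), (excluded_middle_informative (Uf x));
      simpl; intuition discriminate. }
  assert (Hnu_ff : forall x, Ble Bff (nu x) = true <-> Uf x).
  { intro x; unfold nu, Bchar.
    destruct (excluded_middle_informative (Ut x)), (excluded_middle_informative (Uf x));
      simpl; intuition discriminate. }
  exists nu; repeat split.
  - apply open_join; apply open_Bchar; auto.
  - intro x; apply Ble_atoms; intros d [-> | ->] Hd; [apply Hnu_tt | apply Hnu_ff]; auto.
  - apply closure_ge.
  - intro x; apply Ble_atoms; intros d [-> | ->] Hd; apply NNPP; intro Hlx;
      apply not_true_iff_false in Hlx.
    + refine (closure_disjoint_cut Btt Vt nu Atom_tt HVt _ x Hd (Hlamt x Hlx)).
      intros y Hy; apply Hnu_tt in Hy; eauto.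
    + refine (closure_disjoint_cut Bff Vf nu Atom_ff HVf _ x Hd (Hlamf x Hlx)).
      intros y Hy; apply Hnu_ff in Hy; eauto.
Qed.

Lemma Bnormal_iff_cuts_normal :
  Bnormal tau <-> Tnormal (cut tau Btt) /\ Tnormal (cut tau Bff).
Proof.
  split.
  - intro Hn; split; apply Bnormal_cut_normal; auto.
  - intros [Htt Hff]; now apply cuts_normal_Bnormal.
Qed.

End BTopology.

Section Specialization.
Variables (X : Type) (tau : (X -> B) -> Prop).

Definition cut_spec (c : B) (x y : X) : Prop := forall U, cut tau c U -> U x -> U y.

Lemma Ble_Omega c x y : Atom c -> Ble c (Omega tau x y) = true <-> cut_spec c x y.
Proof.
  intro Hc; unfold Omega; rewrite Ble_inf by exact Hc.
  split.
  - intros H U [l [Hl ->]] Hx.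
    specialize (H _ (ex_intro _ l (conj Hl eq_refl))).
    unfold Bimp in H; rewrite Ble_join, orb_true_iff, Ble_neg_true in H by exact Hc.
    destruct H as [H | H]; [contradiction | exact H].
  - intros H d [l [Hl ->]]; unfold Bimp; rewrite Ble_join, orb_true_iff by exact Hc.
    destruct (Ble c (l x)) eqn:E.
    + right; exact (H _ (cut_open _ _ c l Hl) E).
    + left; apply Ble_neg_true; [exact Hc|]; congruence.
Qed.

Lemma Omega_eq_iff x y x' y' :
  Omega tau x y = Omega tau x' y' <->
  (forall c, Atom c -> (cut_spec c x y <-> cut_spec c x' y')).
Proof.
  split.
  - intros E c Hc; rewrite <- !Ble_Omega by exact Hc; now rewrite E.
  - intro H; apply B_eq_atoms; intros c Hc; apply eq_iff_eq_true.
    rewrite !Ble_Omega by exact Hc; auto.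
Qed.

Lemma Omega_eq_B1 x y : Omega tau x y = B1 <-> cut_spec Btt x y /\ cut_spec Bff x y.
Proof.
  split.
  - intro E; split; apply Ble_Omega; auto; now rewrite E.
  - intros [Htt Hff]; apply B_eq_atoms; intros c Hc; rewrite Ble_B1.
    destruct Hc; subst; apply Ble_Omega; auto.
Qed.

Lemma TR0_iff_cut_spec_sym c :
  TR0 (cut tau c) <-> (forall x y, cut_spec c y x -> cut_spec c x y).
Proof.
  unfold TR0, Tclosure; split.
  - intros H x y Hyx U HU Hx; apply (H U x HU Hx y).
    intros W HW Wy; exists x; split; [reflexivity | exact (Hyx W HW Wy)].
  - intros H U x HU Hx y Hy; apply (H x y); [|assumption..].
    intros W HW Wy; destruct (Hy W HW Wy) as [z [-> Wz]]; exact Wz.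
Qed.

Lemma BR0_iff_cuts_R0 : BR0 tau <-> TR0 (cut tau Btt) /\ TR0 (cut tau Bff).
Proof.
  rewrite !TR0_iff_cut_spec_sym; unfold BR0; split.
  - intro H; split; intros x y; apply (proj1 (Omega_eq_iff y x x y) (H y x)); auto.
  - intros [Htt Hff] x y; apply Omega_eq_iff; intros c [-> | ->]; split; auto.
Qed.

Lemma not_separating_topology (x y : X) : is_topology (fun W : X -> Prop => W x <-> W y).
Proof.
  split; [tauto | split].
  - intros F HF; split; intros [U [FU HU]]; exists U; split; auto; now apply (HF U FU).
  - intros U V HU HV; tauto.
Qed.

Lemma BT0_iff_join_T0 : BT0 tau <-> TT0 (join_topology (cut tau Btt) (cut tau Bff)).
Proof.
  unfold BT0, TT0, join_topology; split.
  - intros HB x y Hne; apply NNPP; intro Hsep.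
    assert (Hspec : forall c, Atom c -> cut_spec c x y /\ cut_spec c y x).
    { intros c Hc; split; intros U HU HU'; apply NNPP; intro HnU; apply Hsep; exists U;
        (split; [intros T _ HT; destruct Hc; subst; auto | tauto]). }
    apply Hne, HB; apply Omega_eq_B1; split; apply Hspec; auto.
  - intros HT x y Hxy Hyx; apply Omega_eq_B1 in Hxy as [Hxy_tt Hxy_ff], Hyx as [Hyx_tt Hyx_ff].
    apply NNPP; intro Hne; destruct (HT x y Hne) as [U [HU Hsep]].
    assert (U x <-> U y).
    { apply (HU _ (not_separating_topology x y)).
      intros V [HV | HV]; split;
        [apply Hxy_tt | apply Hyx_tt | apply Hxy_ff | apply Hyx_ff]; assumption. }
    tauto.
Qed.

End Specialization.

Theorem mainTheorem18 (X : Type) (tau : (X -> B) -> Prop) :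
  is_Btopology tau ->
  (Bnormal tau <-> Tnormal (cut tau Btt) /\ Tnormal (cut tau Bff)) /\
  (BT4 tau <->
     TT0 (join_topology (cut tau Btt) (cut tau Bff)) /\
     TR0 (cut tau Btt) /\ TR0 (cut tau Bff) /\
     Tnormal (cut tau Btt) /\ Tnormal (cut tau Bff)).
Proof.
  intro Htau.
  pose proof (Bnormal_iff_cuts_normal X tau Htau).
  pose proof (BR0_iff_cuts_R0 X tau).
  pose proof (BT0_iff_join_T0 X tau).
  unfold BT4, BT1; tauto.
Qed.
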